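(* Let $A\in M_n$ be normal and $c\in\mathbb{R}^n$. Then $W(A;c)$ is the intersection of finitely many closed half-planes of $\mathbb{C}$ and is bounded; i.e. $W(A;c)$ is a convex polygon (possibly empty, a single point, or a line segment).
   Context: $M_n$ denotes the space of $n\times n$ complex matrices. For $A\in M_n$ and $\theta\in\mathbb{R}$, put $H_\theta(A)=\frac{1}{2}(e^{i\theta}A+e^{-i\theta}A^* )$, a Hermitian matrix. For a Hermitian $H\in M_n$, $\lambda_1(H)\ge\lambda_2(H)\ge\cdots\ge\lambda_n(H)$ denote its eigenvalues in nonincreasing order, counted with multiplicity. For $c=(c_1,\dots,c_n)^t\in\mathbb{R}^n$ the weighted numerical range of $A$ is $$W(A;c)=\bigcap_{\theta\in[0,2\pi)}\Big\{v\in\mathbb{C}:\ \mathrm{Re}(e^{i\theta}v)\le \sum_{j=1}^n c_j\lambda_j(H_\theta(A))\Big\}.$$ *)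

From HB Require Import structures.
From mathcomp Require Import all_boot all_order all_algebra.
Set Implicit Arguments. Unset Strict Implicit. Unset Printing Implicit Defensive.
Import Order.TTheory GRing.Theory Num.Theory.
Local Open Scope ring_scope.

Definition adjmx (C : numClosedFieldType) (m n : nat) (A : 'M[C]_(m, n)) : 'M[C]_(n, m) :=
  map_mx (fun z => z^*) A^T.

Definition is_normal_mx (C : numClosedFieldType) (n : nat) (A : 'M[C]_n) : Prop :=
  A *m adjmx A = adjmx A *m A.

(* H_theta(A) with u = e^{i theta}:  (u A + conj(u) A^* ) / 2 *)
Definition Hpart (C : numClosedFieldType) (n : nat) (u : C) (A : 'M[C]_n) : 'M[C]_n :=
  2^-1 *: (u *: A + u^* *: adjmx A).

(* The eigenvalues of H (roots of its characteristic polynomial, with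
   multiplicity), sorted in nonincreasing order.  For Hermitian H all roots
   are real, hence totally ordered. *)
Definition eigs_desc (C : numClosedFieldType) (n : nat) (H : 'M[C]_n) : seq C :=
  sort (fun x y : C => y <= x) (sval (closed_field_poly_normal (char_poly H))).

(* lambda_j(H), j = 0 .. n-1 (0-based; lambda_1 in the paper is j = 0) *)
Definition eig (C : numClosedFieldType) (n : nat) (H : 'M[C]_n) (j : 'I_n) : C :=
  nth 0 (eigs_desc H) j.

(* Weighted numerical range W(A;c); theta in [0,2pi) is parametrised by
   u = e^{i theta} ranging over the unit circle |u| = 1. *)
Definition wnr (C : numClosedFieldType) (n : nat) (A : 'M[C]_n) (c : 'I_n -> C)
  (v : C) : Prop :=
  forall u : C, `|u| = 1 ->
    'Re (u * v) <= \sum_(j < n) c j * eig (Hpart u A) j.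

From HB Require Import structures.
From mathcomp Require Import all_boot all_order all_algebra.
From mathcomp Require Import ring.
Import Order.TTheory GRing.Theory Num.Theory.
Local Open Scope ring_scope.
Set Implicit Arguments. Unset Strict Implicit. Unset Printing Implicit Defensive.

(* For normal [A = P^-1 diag(d) P] with [P] unitary, [H_theta(A)] is similar
   to [diag(Re (u d_k))], [u = e^{i theta}]; so if the permutation [p] lists the
   [Re (u d_k)] in nonincreasing order, the defining sum equals [Re (u z_p)] with
   [z_p = \sum_j c_j d_(p j)].  The [u] for which [p] is such an ordering form
   the planar polyhedral cone [K_p = {u | Re (u (d_(p i) - d_(p j))) >= 0, i < j}],
   hence [W(A;c) = {v | Re (u (v - z_p)) <= 0 for every p and every u in K_p}].
   A planar polyhedral cone is generated by finitely many explicit rays, which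
   leaves finitely many half-planes; the directions [u = 1, -1, i, -i] bound
   [W(A;c)]. *)

Section PlanarCones.
Variable C : numClosedFieldType.
Implicit Types (B : seq C) (b e h u w x z : C).

Definition polycone B u := all (fun b => 0 <= 'Re (u * b)) B.

(* Candidate rays: the edge directions [i conj b] and [- i conj b] of the faces,
   plus [conj b] and the axes for cones that are half-planes or the whole plane. *)
Definition cone_candidates B : seq C :=
  [:: 1; -1; 'i; - 'i] ++ flatten [seq [:: b^*; 'i * b^*; - ('i * b^*)] | b <- B].

Definition cone_generators B :=
  [seq h <- cone_candidates B | (h != 0) && polycone B h].

Lemma polyconeZ B (l : C) u : 0 < l -> polycone B (l * u) = polycone B u.
Proof.
move=> l0; apply: eq_all => b /=.
by rewrite -mulrA ReMl ?gtr0_real // pmulr_rge0.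
Qed.

Lemma mem_cone_candidates B b : b \in B ->
  [/\ b^* \in cone_candidates B, 'i * b^* \in cone_candidates B
    & - ('i * b^*) \in cone_candidates B].
Proof.
move=> bB; rewrite !mem_cat; split; apply/orP; right; apply/flatten_mapP;
  by exists b => //; rewrite !inE eqxx ?orbT.
Qed.

Lemma Re_axes_le0 w : 'Re w <= 0 -> 'Re (- w) <= 0 ->
  'Re ('i * w) <= 0 -> 'Re (- 'i * w) <= 0 -> w = 0.
Proof.
rewrite mulNr !raddfN /= ReMil opprK !oppr_le0 => h1 h2 h3 h4.
rewrite [w]Crect (@le_anti _ _ ('Re w) 0) ?h1 // (@le_anti _ _ ('Im w) 0) ?h4 //.
by rewrite mulr0 addr0.
Qed.

(* [|b|^2 u = Re(u b) conj b + Im(u b) (i conj b)], read through [Re (_ * z)]. *)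
Lemma Re_mul_conj_decomp u b z :
  'Re (u * b) * 'Re (b^* * z) =
  b * b^* * 'Re (u * z) - 'Im (u * b) * 'Re ('i * b^* * z).
Proof.
have ub := Crect (u * b); set r := 'Re (u * b) in ub *; set m := 'Im (u * b) in ub *.
rewrite -!ReMl ?Creal_Re ?Creal_Im ?ger0_real ?mul_conjC_ge0 // -raddfB /=.
apply: congr1; have -> : b * b^* * (u * z) = u * b * b^* * z by ring.
by rewrite ub; ring.
Qed.

Lemma argmin_real_seq (T : eqType) (f : T -> C) (s : seq T) : s != [::] ->
  (forall a, f a \is Num.real) ->
  exists2 m, m \in s & forall a, a \in s -> f m <= f a.
Proof.
move=> + fR; elim: s => // a [|a' s] IH _.
  by exists a; rewrite ?mem_head // => a''; rewrite inE => /eqP->.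
have [m ms mmin] := IH isT.
have [am|ma] := real_leP (fR a) (fR m).
  exists a; first exact: mem_head.
  by move=> a''; rewrite inE => /orP[/eqP->//|/mmin]; exact: le_trans.
exists m; first by rewrite inE ms orbT.
by move=> a''; rewrite inE => /orP[/eqP->|/mmin//]; apply: ltW.
Qed.

(* The exit time is the least ratio ['Re (u * b) / - 'Re (e * b)] over the
   faces [b] with ['Re (e * b) < 0]. *)
Lemma polycone_exit B u e : polycone B u -> polycone B e \/
  exists t b, [/\ 0 <= t, b \in B, 'Re (e * b) < 0, polycone B (u + t * e)
                & 'Re ((u + t * e) * b) = 0].
Proof.
move=> /allP Ku.
set S := [seq b <- B | 'Re (e * b) < 0].
have [S0|SN0] := eqVneq S [::].
  left; apply/allP => b bB; rewrite real_leNgt ?real0 //=.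
  apply/negP => eb; have : b \in S by rewrite mem_filter eb.
  by rewrite S0.
right.
have ratioR b : 'Re (u * b) / - 'Re (e * b) \is Num.real by rewrite realM ?realV ?realN.
have [bm bmS bmmin] := argmin_real_seq SN0 ratioR.
move: (bmS); rewrite mem_filter => /andP[ebm bmB].
set t := 'Re (u * bm) / - 'Re (e * bm) in bmmin *.
have ebm' : 0 < - 'Re (e * bm) by rewrite oppr_gt0.
have ReD b : 'Re ((u + t * e) * b) = 'Re (u * b) + t * 'Re (e * b).
  by rewrite mulrDl raddfD /= -mulrA (ReMl (ratioR bm)).
exists t, bm; split => //.
- by rewrite divr_ge0 ?Ku // ltW.
- apply/allP => b bB; rewrite ReD.
  have [eb|eb] := real_leP (real0 C) (Creal_Re (e * b)).
    by rewrite addr_ge0 ?Ku // mulr_ge0 // divr_ge0 ?Ku // ltW.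
  have eb' : 0 < - 'Re (e * b) by rewrite oppr_gt0.
  have := bmmin b; rewrite mem_filter eb bB => /(_ isT).
  by rewrite -(ler_pM2r eb') divfK ?gt_eqF // mulrN -subr_ge0 opprK.
- by rewrite ReD /t invrN mulrN mulNr -mulrA mulVf ?mulr1 ?subrr // lt_eqF.
Qed.

Section Polar.
Variables (B : seq C) (w : C).
Hypothesis generators_le0 : forall h, h \in cone_generators B -> 'Re (h * w) <= 0.

Lemma polycone_ray_le0 x h (l : C) : h \in cone_candidates B -> h != 0 ->
  0 < l -> x = l * h -> polycone B x -> 'Re (x * w) <= 0.
Proof.
move=> hH h0 l0 -> Kx; rewrite polyconeZ // in Kx.
rewrite -mulrA ReMl ?gtr0_real // pmulr_rle0 //.
by apply: generators_le0; rewrite mem_filter h0 Kx hH.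
Qed.

(* On the face of [b] the cone point [x] is a nonnegative multiple of [i conj b]
   or of [- i conj b]. *)
Lemma polycone_face_le0 x b : polycone B x -> b \in B -> b != 0 ->
  'Re (x * b) = 0 -> 'Re (x * w) <= 0.
Proof.
move=> Kx bB b0 xb0.
have [->|x0] := eqVneq x 0; first by rewrite mul0r raddf0.
set y := 'Im (x * b).
have N0 : 0 < b * b^* by rewrite mul_conjC_gt0.
have xE : x = y / (b * b^*) * ('i * b^*).
  have xb : x * b = 'i * y by rewrite [x * b]Crect xb0 add0r.
  have -> : y / (b * b^*) * ('i * b^*) = 'i * y * b^* / (b * b^*) by ring.
  by rewrite -xb -[x * b * b^*]mulrA mulfK ?gt_eqF.
have [H1 H2 H3] := mem_cone_candidates bB.
have g0 : 'i * b^* != 0 by rewrite mulf_eq0 negb_or neq0Ci conjC_eq0.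
have [yneg|ypos|y0] := real_ltgtP (Creal_Im (x * b)) (real0 C).
- apply: (polycone_ray_le0 (l := - y / (b * b^*)) H3 _ _ _ Kx).
  + by rewrite oppr_eq0.
  + by rewrite divr_gt0 // oppr_gt0.
  + by rewrite mulNr mulrNN.
- exact: (polycone_ray_le0 H2 g0 (divr_gt0 ypos N0) xE).
- by move: x0; rewrite xE /y y0 !mul0r eqxx.
Qed.

Lemma polycone_dir_le0 u e b0 : polycone B u -> 0 < 'Re (u * w) ->
  b0 \in B -> b0 != 0 -> 'Re (e * b0) = 0 -> 0 <= 'Re (e * w) ->
  polycone B e /\ 'Re (e * w) = 0.
Proof.
move=> Ku uw b0B b0N0 eb0 ew.
have [Ke|[t [b [t0 bB eb Kx xb]]]] := polycone_exit e Ku.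
  by split=> //; apply: le_anti; rewrite ew (polycone_face_le0 Ke b0B b0N0 eb0).
have bN0 : b != 0 by apply: contraTneq eb => ->; rewrite mulr0 raddf0 ltxx.
have := polycone_face_le0 Kx bB bN0 xb.
rewrite mulrDl raddfD /= -mulrA (ReMl (ger0_real t0)) => le0.
have : 0 < 'Re (u * w) + t * 'Re (e * w) by rewrite (lt_le_trans uw) // lerDl mulr_ge0.
by move=> /lt_le_trans/(_ le0); rewrite ltxx.
Qed.

Lemma polycone_le0_trivial : (forall b, b \in B -> b = 0) -> w = 0.
Proof.
move=> B0.
have K h : polycone B h by apply/allP => b /B0->; rewrite mulr0 raddf0.
have axis_le0 h : h \in [:: 1; -1; 'i; - 'i] -> 'Re (h * w) <= 0.
  move=> hax; apply: generators_le0; rewrite mem_filter K mem_cat hax andbT /=.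
  by move: hax; rewrite !inE => /or4P[] /eqP->; rewrite ?oppr_eq0 ?oner_eq0 ?neq0Ci.
apply: Re_axes_le0.
- by rewrite -[w]mul1r axis_le0 ?inE ?eqxx.
- by rewrite -mulN1r axis_le0 // !inE eqxx orbT.
- by rewrite axis_le0 // !inE eqxx !orbT.
- by rewrite axis_le0 // !inE eqxx !orbT.
Qed.

(* Sliding [u] along the face direction [g] of [b0], both ways, cannot leave
   the cone, so the whole line [R g] lies in it. *)
Lemma polycone_face_line u b0 (g := 'i * b0^*) : polycone B u -> 0 < 'Re (u * w) ->
  b0 \in B -> b0 != 0 ->
  'Re (g * w) = 0 /\ forall b, b \in B -> 'Re (g * b) = 0.
Proof.
move=> Ku uw b0B b0N0.
have gb0 : 'Re (g * b0) = 0.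
  rewrite -mulrA ReMil mulrC; apply/eqP; rewrite oppr_eq0; apply/eqP/Creal_ImP.
  by rewrite ger0_real // mul_conjC_ge0.
have Ngb0 : 'Re (- g * b0) = 0 by rewrite mulNr raddfN /= gb0 oppr0.
have gw : 'Re (g * w) = 0.
  have [gw|gw] := real_leP (real0 C) (Creal_Re (g * w)).
    by case: (polycone_dir_le0 Ku uw b0B b0N0 gb0 gw).
  have := polycone_dir_le0 Ku uw b0B b0N0 Ngb0.
  rewrite mulNr raddfN /= oppr_ge0 => /(_ (ltW gw)) [_ /eqP].
  by rewrite oppr_eq0 => /eqP.
have [Kg _] := polycone_dir_le0 Ku uw b0B b0N0 gb0 ltac:(by rewrite gw).
have [KNg _] := polycone_dir_le0 Ku uw b0B b0N0 Ngb0
  ltac:(by rewrite mulNr raddfN /= gw oppr0).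
split=> // b bB; apply/le_anti; rewrite (allP Kg b bB) andbT.
by have := allP KNg b bB; rewrite mulNr raddfN /= oppr_ge0.
Qed.

(* If [u] beat [w] strictly, the cone would be the half-plane bounded by the
   face of some [b0 != 0]; then [conj b0] is a generator, and [u] is a positive
   multiple of [conj b0] plus a multiple of [i conj b0]. *)
Lemma polycone_le0 u : polycone B u -> 'Re (u * w) <= 0.
Proof.
move=> Ku.
have [/hasP[b0 b0B b0N0]|/hasPn B0] := boolP (has (fun b => b != 0) B); last first.
  by rewrite polycone_le0_trivial ?mulr0 ?raddf0 // => b /B0; rewrite negbK => /eqP.
rewrite real_leNgt ?Creal_Re ?real0 //; apply/negP => uw.
have := allP Ku b0 b0B; rewrite le_eqVlt => /orP[/eqP ub0|ub0].
  move: uw; rewrite real_ltNge ?Creal_Re ?real0 //.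
  by rewrite (polycone_face_le0 Ku b0B b0N0 (esym ub0)).
have [gw gB] := polycone_face_line Ku uw b0B b0N0.
have decomp z := Re_mul_conj_decomp u b0 z.
have Kb0 : polycone B b0^*.
  apply/allP => b bB; rewrite -(pmulr_rge0 _ ub0) decomp gB // mulr0 subr0.
  by rewrite mulr_ge0 ?mul_conjC_ge0 ?(allP Ku b bB).
have b0w : 'Re (b0^* * w) <= 0.
  have [H1 _ _] := mem_cone_candidates b0B.
  by apply: generators_le0; rewrite mem_filter conjC_eq0 b0N0 Kb0 H1.
move: b0w; rewrite -(pmulr_rle0 _ ub0) decomp gw mulr0 subr0.
by rewrite pmulr_rle0 ?mul_conjC_gt0 // real_leNgt ?Creal_Re ?real0 // uw.
Qed.
End Polar.

Lemma polycone_polar B w : (forall u, polycone B u -> 'Re (u * w) <= 0) <->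
  (forall h, h \in cone_generators B -> 'Re (h * w) <= 0).
Proof.
split=> [le0 h|]; last exact: polycone_le0.
by rewrite mem_filter => /andP[/andP[_ /le0]].
Qed.

End PlanarCones.

Lemma char_poly_similar (R : comUnitRingType) n (P M : 'M[R]_n) : P \in unitmx ->
  char_poly (invmx P *m M *m P) = char_poly M.
Proof.
move=> Pu; rewrite /char_poly /char_poly_mx.
set f := map_mx (@polyC R).
have fPP : f (invmx P) *m f P = 1%:M by rewrite -map_mxM mulVmx // map_mx1.
have -> : 'X%:M - f (invmx P *m M *m P) = f (invmx P) *m ('X%:M - f M) *m f P.
  rewrite /f !map_mxM -/f mulmxBr mulmxBl.
  by rewrite scalar_mxC -(mulmxA _%:M) fPP mulmx1.
rewrite !det_mulmx mulrC mulrA -det_mulmx.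
by rewrite -map_mxM mulmxV // map_mx1 det1 mul1r.
Qed.

Section NormalSpectrum.
Variable C : numClosedFieldType.

Lemma sort_ge_sorted_real (s : seq C) : all (fun x => x \is Num.real) s ->
  sorted >=%R (sort >=%R s).
Proof.
by apply: sort_sorted_in => x y xR yR; exact: real_leVge.
Qed.

Lemma adjmxM m n p (X : 'M[C]_(m, n)) (Y : 'M[C]_(n, p)) :
  adjmx (X *m Y) = adjmx Y *m adjmx X.
Proof. by rewrite /adjmx trmx_mul map_mxM. Qed.

Lemma adjmxK m n (X : 'M[C]_(m, n)) : adjmx (adjmx X) = X.
Proof. exact: trmxCK. Qed.

Lemma adjmx_diag n (d : 'rV[C]_n) :
  adjmx (diag_mx d) = diag_mx (map_mx (fun z => z^*) d).
Proof. by rewrite /adjmx tr_diag_mx map_diag_mx. Qed.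

Lemma eigs_desc_similar_diag n (P : 'M[C]_n) (d : 'rV[C]_n) : P \in unitmx ->
  (forall k, d 0 k \is Num.real) ->
  eigs_desc (invmx P *m diag_mx d *m P) = sort >=%R [seq d 0 k | k <- enum 'I_n].
Proof.
move=> Pu dR; rewrite /eigs_desc; case: closed_field_poly_normal => s /= Es.
rewrite (monicP (char_poly_monic _)) scale1r char_poly_similar // in Es.
rewrite char_poly_trig ?diag_mx_is_trig // in Es.
set r := [seq _ | k <- _].
have pe : perm_eq s r.
  apply: prod_XsubC_eq; rewrite -Es /r big_map big_enum /=.
  by apply: eq_bigr => i _; rewrite !mxE eqxx mulr1n.
have sR x : x \in s -> x \is Num.real by rewrite (perm_mem pe) => /mapP [k _ ->].
apply/perm_sort_inP => //; last exact: in2W ge_anti.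
- by move=> x y /sR xR /sR yR; exact: real_leVge.
- exact: in3W ge_trans.
Qed.

Lemma Hpart_normal n (A : 'M[C]_n) u : is_normal_mx A ->
  Hpart u A = invmx (spectralmx A) *m
     diag_mx (\row_k 'Re (u * spectral_diag A 0 k)) *m spectralmx A.
Proof.
move=> /normalmxP/orthomx_spectralP EA.
set P := spectralmx A in EA *; set D := spectral_diag A in EA *.
have iP : invmx P = adjmx P by rewrite invmx_unitary ?spectral_unitarymx.
have EA' : adjmx A = invmx P *m diag_mx (map_mx (fun z => z^*) D) *m P.
  by rewrite {1}EA !adjmxM adjmx_diag iP adjmxK mulmxA.
rewrite /Hpart EA' {1}EA.
have -> : diag_mx (\row_k 'Re (u * D 0 k)) =
   2^-1 *: (u *: diag_mx D + u^* *: diag_mx (map_mx (fun z => z^*) D)).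
  apply/matrixP => i j; rewrite !mxE.
  case: eqP => [->|_]; last by rewrite !mulr0n !mulr0 addr0 mulr0.
  by rewrite !mulr1n ReE rmorphM /= mulrC.
by rewrite -!scalemxAr -!scalemxAl mulmxDr mulmxDl -!scalemxAr -!scalemxAl.
Qed.

Lemma eigs_desc_Hpart_normal n (A : 'M[C]_n) u : is_normal_mx A ->
  eigs_desc (Hpart u A) =
  sort >=%R [seq 'Re (u * spectral_diag A 0 k) | k <- enum 'I_n].
Proof.
move=> nA; rewrite Hpart_normal // eigs_desc_similar_diag ?spectral_unit //.
  by congr sort; apply: eq_map => k; rewrite mxE.
by move=> k; rewrite mxE Creal_Re.
Qed.

End NormalSpectrum.

Fixpoint pair_diffs (V : zmodType) (s : seq V) : seq V :=
  if s is x :: s' then [seq x - y | y <- s'] ++ pair_diffs s' else [::].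

Lemma pairwise_Re_polycone (C : numClosedFieldType) (u : C) s :
  pairwise (fun x y => 'Re (u * y) <= 'Re (u * x)) s = polycone (pair_diffs s) u.
Proof.
elim: s => //= x s ->; rewrite /polycone all_cat all_map.
by congr (_ && _); apply: eq_all => y /=; rewrite mulrBr raddfB /= subr_ge0.
Qed.

Section WeightedRange.
Variables (C : numClosedFieldType) (n : nat) (A : 'M[C]_n) (c : 'I_n -> C).
Hypotheses (A_normal : is_normal_mx A) (c_real : forall j, c j \is Num.real).

Let d k := spectral_diag A 0 k.

Definition wvertex (p : seq 'I_n) := \sum_(j < n) c j * nth 0 (map d p) j.

Lemma sorted_Re_polycone u (p : seq 'I_n) :
  sorted >=%R [seq 'Re (u * d k) | k <- p] = polycone (pair_diffs (map d p)) u.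
Proof.
rewrite sorted_pairwise; last exact: ge_trans.
by rewrite pairwise_map -pairwise_Re_polycone pairwise_map.
Qed.

Lemma weighted_eig_sum_sorted u (p : seq 'I_n) : perm_eq (enum 'I_n) p ->
  sorted >=%R [seq 'Re (u * d k) | k <- p] ->
  \sum_(j < n) c j * eig (Hpart u A) j = 'Re (u * wvertex p).
Proof.
move=> pe srt.
have E : eigs_desc (Hpart u A) = [seq 'Re (u * d k) | k <- p].
  rewrite eigs_desc_Hpart_normal //; apply: (sorted_eq ge_trans ge_anti) => //.
    by apply: sort_ge_sorted_real; apply/allP => x /mapP [k _ ->]; apply: Creal_Re.
  by rewrite perm_sort; exact: perm_map pe.
have sz : size p = n by rewrite -(perm_size pe) size_enum_ord.
rewrite /wvertex mulr_sumr raddf_sum; apply: eq_bigr => j _.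
rewrite /eig E /= mulrCA (ReMl (c_real j)) (nth_map j) ?sz //.
by rewrite (nth_map j) ?size_map ?sz.
Qed.

Lemma wnr_polyconeE v : wnr A c v <->
  (forall p, p \in permutations (enum 'I_n) ->
   forall u, polycone (pair_diffs (map d p)) u -> 'Re (u * (v - wvertex p)) <= 0).
Proof.
split=> [W p pP u Ku|H u u1].
  have [->|u0] := eqVneq u 0; first by rewrite mul0r raddf0.
  have nu : 0 < `|u| by rewrite normr_gt0.
  set u' := `|u|^-1 * u.
  have u'1 : `|u'| = 1 by rewrite normrM normfV normr_id mulVf ?gt_eqF.
  have Ku' : polycone (pair_diffs (map d p)) u' by rewrite polyconeZ ?invr_gt0.
  have pe : perm_eq (enum 'I_n) p by rewrite perm_sym -mem_permutations.
  have := W u' u'1; rewrite (weighted_eig_sum_sorted pe) ?sorted_Re_polycone //.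
  have -> : 'Re (u * (v - wvertex p)) = `|u| * 'Re (u' * (v - wvertex p)).
    by rewrite -ReMl ?normr_real // mulrA /u' mulVKf ?gt_eqF.
  by rewrite pmulr_rle0 // mulrBr raddfB /= subr_le0.
pose p := sort (relpre (fun k => 'Re (u * d k)) >=%R) (enum 'I_n).
have pe : perm_eq (enum 'I_n) p by rewrite perm_sym perm_sort.
have srt : sorted >=%R [seq 'Re (u * d k) | k <- p].
  rewrite /p -sort_map; apply: sort_ge_sorted_real.
  by apply/allP => x /mapP [k _ ->]; apply: Creal_Re.
rewrite (weighted_eig_sum_sorted pe srt) -subr_le0 -raddfB /= -mulrBr.
by apply: H; rewrite ?mem_permutations 1?perm_sym // -sorted_Re_polycone.
Qed.

Lemma wnr_polygon : exists hp : seq (C * C),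
  (forall h, h \in hp -> h.1 != 0 /\ h.2 \is Num.real) /\
  (forall v : C, wnr A c v <-> (forall h, h \in hp -> 'Re (h.1 * v) <= h.2)).
Proof.
exists [seq (h, 'Re (h * wvertex p)) | p <- permutations (enum 'I_n),
                                      h <- cone_generators (pair_diffs (map d p))].
split=> [h /allpairsPdep [p [h' [_ hH ->]]] /=|v].
  by split; [move: hH; rewrite mem_filter => /andP [/andP []] | apply: Creal_Re].
rewrite wnr_polyconeE; split=> [W h /allpairsPdep [p [h' [pP hH ->]]] /=|H p pP].
  by have := (polycone_polar _ _).1 (W p pP) h' hH; rewrite mulrBr raddfB subr_le0.
apply/polycone_polar => h hH; rewrite mulrBr raddfB subr_le0.
by apply: (H (h, 'Re (h * wvertex p))); apply/allpairsPdep; exists p, h.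
Qed.

End WeightedRange.

Lemma real_ler_norm_sandwich (R : numDomainType) (x a b : R) : x \is Num.real ->
  x <= a -> - x <= b -> `|x| <= `|a| + `|b|.
Proof.
move=> xR xa xb.
have aR : a \is Num.real by rewrite -(subrK x a) realD // ger0_real // subr_ge0.
have bR : b \is Num.real.
  by rewrite -(subrK (- x) b) realD ?realN // ger0_real // subr_ge0.
rewrite real_ler_norml //; apply/andP; split.
  by rewrite lerNl (le_trans xb) // (le_trans (real_ler_norm bR)) // lerDr.
by rewrite (le_trans xa) // (le_trans (real_ler_norm aR)) // lerDl.
Qed.

Lemma wnr_bounded (C : numClosedFieldType) n (A : 'M[C]_n) (c : 'I_n -> C) :
  exists M : C, M \is Num.real /\ forall v : C, wnr A c v -> `|v| <= M.
Proof.
pose F u := \sum_(j < n) c j * eig (Hpart u A) j.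
exists ((`|F 1| + `|F (-1)|) + (`|F (- 'i)| + `|F 'i|)); split.
  by rewrite !realD ?normr_real.
move=> v W.
have Re_le : 'Re v <= F 1 by have := W 1 (normr1 _); rewrite mul1r.
have ReN_le : - 'Re v <= F (-1).
  by have := W (-1); rewrite normrN normr1 mulN1r raddfN => ->.
have ImN_le : - 'Im v <= F 'i by have := W 'i (normCi _); rewrite ReMil.
have Im_le : 'Im v <= F (- 'i).
  by have := W (- 'i); rewrite normrN normCi mulNr raddfN /= ReMil opprK => ->.
apply: le_trans (lerD (real_ler_norm_sandwich (Creal_Re v) Re_le ReN_le)
                      (real_ler_norm_sandwich (Creal_Im v) Im_le ImN_le)).
by rewrite {1}[v]Crect (le_trans (ler_normD _ _)) // normrM normCi mul1r.
Qed.

Unset Implicit Arguments.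

Theorem mainTheorem3 (C : numClosedFieldType) (n : nat) (A : 'M[C]_n) (c : 'I_n -> C) :
  is_normal_mx A -> (forall j, c j \is Num.real) ->
  (exists hp : seq (C * C),
      (forall h, h \in hp -> h.1 != 0 /\ h.2 \is Num.real) /\
      (forall v : C, wnr A c v <-> (forall h, h \in hp -> 'Re (h.1 * v) <= h.2)))
  /\ (exists M : C, M \is Num.real /\ forall v : C, wnr A c v -> `|v| <= M).
Proof.
by move=> nA cR; split; [exact: wnr_polygon | exact: wnr_bounded].
Qed.
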